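(* Let $G$ be a vertex-transitive graph and let $\{W_v\}_{v\in V(G)}$ be subspaces of $\mathbb{C}^d$ such that distinct non-adjacent vertices receive orthogonal subspaces. Then $\sum_{v\in V(G)}\dim W_v\le \dfrac{d\cdot|V(G)|}{\overline{\xi_f}(G)}$.
   Context: For a graph $G$, the complement of the projective rank $\overline{\xi_f}(G)$ is the infimum of $d/r$ over all $d,r\in\mathbb{N}$ for which there is an assignment of $r$-dimensional subspaces $W_v\le\mathbb{C}^d$ to the vertices $v$ of $G$ such that distinct non-adjacent vertices receive orthogonal subspaces. *)

From HB Require Import structures.
From mathcomp Require Import all_boot all_order all_algebra all_fingroup.
From mathcomp Require Import classical_sets reals.
From mathcomp.real_closed Require Import complex.
Set Implicit Arguments.
Unset Strict Implicit.
Unset Printing Implicit Defensive.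
Import Order.TTheory GRing.Theory Num.Theory.
Local Open Scope ring_scope.

Definition simple_graph (T : finType) (e : rel T) : Prop :=
  symmetric e /\ irreflexive e.

Definition is_graph_aut (T : finType) (e : rel T) (f : {perm T}) : Prop :=
  forall x y, e (f x) (f y) = e x y.

Definition vertex_transitive (T : finType) (e : rel T) : Prop :=
  forall x y : T, exists f : {perm T}, is_graph_aut e f /\ f x = y.

(* Subspaces of C^d (C = R[i]) are represented as row spaces of square
   d x d matrices; the dimension of the subspace is the rank.
   Two subspaces (row spaces of A and B) are orthogonal w.r.t. the standard
   Hermitian inner product <u,w> = sum_i u_i conj(w_i) iff A * conj(B)^T = 0. *)
Definition mx_orth (R : rcfType) (d : nat) (A B : 'M[R[i]]_d) : Prop :=
  A *m (map_mx (@conjc R) B)^T = 0.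

Definition orth_assignment (R : rcfType) (T : finType) (e : rel T) (d : nat)
    (W : T -> 'M[R[i]]_d) : Prop :=
  forall u v : T, u != v -> ~~ e u v -> mx_orth (W u) (W v).

Definition xi_bar_ratios (R : realType) (T : finType) (e : rel T) : set R :=
  [set x | exists (d r : nat) (W : T -> 'M[R[i]]_d),
     (0 < r)%N /\ (forall v, \rank (W v) = r) /\ orth_assignment e W /\
     x = d%:R / r%:R].

Definition xi_bar_f (R : realType) (T : finType) (e : rel T) : R :=
  inf (xi_bar_ratios e).

From HB Require Import structures.
From mathcomp Require Import all_boot all_order all_algebra all_fingroup.
From mathcomp Require Import classical_sets reals.
From mathcomp.real_closed Require Import complex.

(* Symmetrize over the automorphism group Aut: the block-diagonal sum of the
   W (f v), f in Aut, is again an orthogonal assignment, in dimension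
   d |Aut|, and by vertex-transitivity each of its subspaces has the same
   dimension |Aut| (sum_v dim W v) / |V|.  Its ratio d |V| / sum_v dim W v
   therefore bounds the infimum from above; the infimum is at least 1
   because r-dimensional subspaces of C^d have r <= d. *)

Set Implicit Arguments.
Unset Strict Implicit.
Unset Printing Implicit Defensive.
Import Order.TTheory GRing.Theory Num.Theory.
Local Open Scope ring_scope.

Section BlockDiagonal.
Variables (n : nat) (p_ : 'I_n -> nat).

Lemma map_mxdiag (V V' : nmodType) (f : {additive V -> V'})
    (B_ : forall i, 'M[V]_(p_ i)) :
  map_mx f (\mxdiag_i B_ i) = \mxdiag_i map_mx f (B_ i).
Proof.
apply/matrixP => s t; rewrite !mxE.
case: eqVneq => _; last by rewrite !mxE raddf0.
by rewrite -(map_mx0 f) -map_conform_mx mxE.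
Qed.

Lemma mul_mxdiag (R : pzSemiRingType) (A_ B_ : forall i, 'M[R]_(p_ i)) :
  \mxdiag_i A_ i *m \mxdiag_i B_ i = \mxdiag_i (A_ i *m B_ i).
Proof.
rewrite [X in _ *m X]/mxdiag mul_mxdiag_mxblock; apply: eq_mxblock => i j.
by case: eqVneq => [->|_]; rewrite ?conform_mx_id ?mulmx0.
Qed.

End BlockDiagonal.

Lemma mx_orth_mxdiag (R : rcfType) n (p_ : 'I_n -> nat)
    (A_ B_ : forall k, 'M[R[i]]_(p_ k)) :
  (forall k, mx_orth (A_ k) (B_ k)) ->
  mx_orth (\mxdiag_k A_ k) (\mxdiag_k B_ k).
Proof.
move=> orthAB; rewrite /mx_orth map_mxdiag tr_mxdiag mul_mxdiag.
by under eq_mxdiag do rewrite orthAB; rewrite mxdiag0.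
Qed.

Section GraphAutomorphisms.
Variables (T : finType) (e : rel T).

Definition graph_aut : {set {perm T}} :=
  [set f : {perm T} | [forall x, forall y, e (f x) (f y) == e x y]].

Lemma graph_autP f : reflect (is_graph_aut e f) (f \in graph_aut).
Proof.
rewrite inE; apply: (iffP forallP) => [autf x y | autf x].
  by move: (autf x) => /forallP /(_ y) /eqP.
by apply/forallP => y; rewrite autf.
Qed.

Lemma group_set_graph_aut : group_set graph_aut.
Proof.
apply/group_setP; split; first by apply/graph_autP => x y; rewrite !perm1.
move=> f g /graph_autP autf /graph_autP autg.
by apply/graph_autP => x y; rewrite !permM autg autf.
Qed.

Canonical graph_aut_group := Group group_set_graph_aut.

Lemma orth_assignment_aut (R : rcfType) d (W : T -> 'M[R[i]]_d) f :
  f \in graph_aut -> orth_assignment e W -> orth_assignment e (W \o f).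
Proof.
move=> /graph_autP autf orthW u v uv euv; apply: orthW; last by rewrite autf.
by rewrite (inj_eq perm_inj).
Qed.

Lemma orth_assignment_mxdiag (R : rcfType) d n
    (W_ : 'I_n -> T -> 'M[R[i]]_d) :
  (forall k, orth_assignment e (W_ k)) ->
  orth_assignment e (fun v => \mxdiag_k W_ k v).
Proof.
by move=> orthW u v uv euv; apply: mx_orth_mxdiag => k; apply: orthW.
Qed.

End GraphAutomorphisms.

Lemma transitive_sum_orbit (T : finType) (G : {group {perm T}})
    (g : T -> nat) v :
  (forall x y, exists2 f, f \in G & f x = y) ->
  (#|T| * \sum_(f in G) g (f v) = #|G| * \sum_x g x)%N.
Proof.
move=> transG.
have orbit_sum_const u : \sum_(f in G) g (f u) = \sum_(f in G) g (f v).
  have [h Gh <-] := transG v u.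
  rewrite [RHS](reindex_inj (mulgI h)) /=.
  by apply: eq_big => [f|f _]; rewrite ?groupMl ?permM.
transitivity (\sum_u \sum_(f in G) g (f u))%N.
  by rewrite -sum_nat_const; apply: eq_bigr => u _; rewrite orbit_sum_const.
rewrite exchange_big /= -sum_nat_const; apply: eq_bigr => f _.
by rewrite [RHS](reindex_inj (@perm_inj _ f)).
Qed.

Lemma card_gt0_of_sum_gt0 (T : finType) (F : T -> nat) :
  (0 < \sum_x F x)%N -> (0 < #|T|)%N.
Proof.
case: (pickP (@predT T)) => [x _ _|T0]; first by apply/card_gt0P; exists x.
by rewrite big_pred0.
Qed.

Section ProjectiveRankComplement.
Variables (R : realType) (T : finType) (e : rel T).
Local Notation ratios := (xi_bar_ratios (R:=R) e).

Lemma xi_bar_ratios_ge0 x : ratios x -> 0 <= x.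
Proof. by move=> [d [r [W [_ [_ [_ ->]]]]]]; rewrite divr_ge0. Qed.

Lemma xi_bar_ratios_ge1 x : (0 < #|T|)%N -> ratios x -> 1 <= x.
Proof.
move=> /card_gt0P[v _] [d [r [W [r_gt0 [rankW [_ ->]]]]]].
by rewrite ler_pdivlMr ?ltr0n // mul1r ler_nat -(rankW v) rank_leq_col.
Qed.

Lemma xi_bar_f_ge0 : 0 <= xi_bar_f R e.
Proof.
rewrite /xi_bar_f.
have [->|/set0P ne] := eqVneq ratios set0; first by rewrite inf0.
by apply: lb_le_inf => // x; apply: xi_bar_ratios_ge0.
Qed.

Lemma xi_bar_f_le_ratio x : ratios x -> xi_bar_f R e <= x.
Proof. by apply: ge_inf; exists 0 => y; apply: xi_bar_ratios_ge0. Qed.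

Lemma xi_bar_f_ge1 x : (0 < #|T|)%N -> ratios x -> 1 <= xi_bar_f R e.
Proof.
move=> T_gt0 ratio_x; apply: lb_le_inf; first by exists x.
by move=> y; apply: xi_bar_ratios_ge1 T_gt0.
Qed.

End ProjectiveRankComplement.

Lemma vertex_transitive_xi_bar_ratio (R : realType) (T : finType) (e : rel T)
    d (W : T -> 'M[R[i]]_d) :
  vertex_transitive e -> orth_assignment e W -> (0 < \sum_v \rank (W v))%N ->
  xi_bar_ratios e ((d * #|T|)%:R / (\sum_v \rank (W v))%:R : R).
Proof.
move=> vtG orthW S_gt0; set S := (\sum_v _)%N in S_gt0 *.
have T_gt0 := card_gt0_of_sum_gt0 S_gt0; have /card_gt0P[v0 _] := T_gt0.
set G := graph_aut_group e.
have transG x y : exists2 f, f \in G & f x = y.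
  by have [f [/graph_autP autf fx]] := vtG x y; exists f.
pose r := (\sum_(f in G) \rank (W (f v0)))%N.
have orbit_r : (#|T| * r = #|G| * S)%N by apply: transitive_sum_orbit.
have r_gt0 : (0 < r)%N.
  by rewrite -(ltn_pmul2l T_gt0) muln0 orbit_r muln_gt0 cardG_gt0.
pose W' v := \mxdiag_(k < #|G|) W (enum_val k v).
have rankW' v : \rank (W' v) = r.
  apply/eqP; rewrite -(eqn_pmul2l T_gt0) orbit_r rank_mxdiag.
  rewrite -(big_enum_val (fun f : {perm T} => \rank (W (f v)))).
  by rewrite -(transitive_sum_orbit _ v).
exists (\sum_(k < #|G|) d)%N, r, W'; do 2!split=> //; split.
  apply: orth_assignment_mxdiag => k.
  exact: orth_assignment_aut (enum_valP k) orthW.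
apply/eqP; rewrite eqr_div ?pnatr_eq0 -?lt0n // -!natrM eqr_nat.
rewrite sum_nat_const card_ord -mulnA orbit_r.
by rewrite mulnCA mulnA [(#|G| * d)%N]mulnC.
Qed.

Theorem corollary15 (R : realType) (T : finType) (e : rel T)
    (Hsimple : simple_graph e) (Hvt : vertex_transitive e)
    (d : nat) (W : T -> 'M[R[i]]_d) (HW : orth_assignment e W) :
  (\sum_(v : T) (\rank (W v))%:R : R) <= (d * #|T|)%:R / xi_bar_f R e.
Proof.
rewrite -natr_sum; set S := (\sum_v _)%N.
have [->|S_gt0] := posnP S; first by rewrite divr_ge0 ?xi_bar_f_ge0.
have ratio := vertex_transitive_xi_bar_ratio Hvt HW S_gt0.
have xi_gt0 : 0 < xi_bar_f R e.
  by apply: lt_le_trans (xi_bar_f_ge1 (card_gt0_of_sum_gt0 S_gt0) ratio).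
rewrite ler_pdivlMr // mulrC -ler_pdivlMr ?ltr0n //.
exact: xi_bar_f_le_ratio.
Qed.
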